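(* Let $T$ be a first-order theory and $p(\bar x)$ a type over $T$. For all sentences $\varphi,\sigma$: $(\varphi\to\sigma)\in[T]^p_\infty$ if and only if $\sigma\in[T+\varphi]^p_\infty$.
   Context: $p(\bar x)$ is a set of formulas with free variables among $\bar x$, consistent with $T$. For a theory $S$, $\mathrm{Th}(S)$ is its set of first-order consequences; $(S)^p=\{\neg\exists\bar x\varphi(\bar x): S\models\forall\bar x(\varphi(\bar x)\to\psi(\bar x))\text{ for all }\psi\in p\}$; $[S]^p=\mathrm{Th}(S+(S)^p)$. Recursively: $[S]^p_0=\mathrm{Th}(S)$, $[S]^p_{\alpha+1}=[[S]^p_\alpha]^p$, $[S]^p_\lambda=\bigcup_{\alpha<\lambda}[S]^p_\alpha$ for limit $\lambda$, and $[S]^p_\infty=\bigcup_{\alpha\in\mathrm{Ord}}[S]^p_\alpha$. *)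

From Stdlib Require Import List.
From Stdlib Require Vectors.Fin.

Set Implicit Arguments.

(** Signatures: function and relation symbols with arities
    (constants are 0-ary function symbols). *)
Record signature := {
  funcs : Type; fun_ar : funcs -> nat;
  rels : Type;  rel_ar : rels -> nat }.

Section FOL.
Variable Sg : signature.

Inductive term : Type :=
  | tvar : nat -> term
  | tapp : forall f : funcs Sg, (Fin.t (fun_ar Sg f) -> term) -> term.

Inductive formula : Type :=
  | FFal : formula
  | FEq  : term -> term -> formula
  | FRel : forall r : rels Sg, (Fin.t (rel_ar Sg r) -> term) -> formula
  | FNeg : formula -> formula
  | FImp : formula -> formula -> formula
  | FAnd : formula -> formula -> formula
  | FOr  : formula -> formula -> formula
  | FAll : nat -> formula -> formula
  | FEx  : nat -> formula -> formula.

Record structure := {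
  dom : Type;
  dom_inh : dom;
  ifun : forall f : funcs Sg, (Fin.t (fun_ar Sg f) -> dom) -> dom;
  irel : forall r : rels Sg, (Fin.t (rel_ar Sg r) -> dom) -> Prop }.

Fixpoint teval (M : structure) (a : nat -> dom M) (t : term) : dom M :=
  match t with
  | tvar n => a n
  | tapp f args => ifun M f (fun i => teval M a (args i))
  end.

Definition update (M : structure) (a : nat -> dom M) (x : nat) (d : dom M)
  : nat -> dom M := fun y => if PeanoNat.Nat.eqb y x then d else a y.

Fixpoint sat (M : structure) (a : nat -> dom M) (phi : formula) : Prop :=
  match phi with
  | FFal => False
  | FEq t1 t2 => teval M a t1 = teval M a t2
  | FRel r args => irel M r (fun i => teval M a (args i))
  | FNeg p => ~ sat M a p
  | FImp p q => sat M a p -> sat M a q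
  | FAnd p q => sat M a p /\ sat M a q
  | FOr p q => sat M a p \/ sat M a q
  | FAll x p => forall d : dom M, sat M (update M a x d) p
  | FEx x p => exists d : dom M, sat M (update M a x d) p
  end.

(** Free variables: [fv_in P phi] means every free variable of phi satisfies P. *)
Fixpoint tvars_in (P : nat -> Prop) (t : term) : Prop :=
  match t with
  | tvar n => P n
  | tapp f args => forall i, tvars_in P (args i)
  end.

Fixpoint fv_in (P : nat -> Prop) (phi : formula) : Prop :=
  match phi with
  | FFal => True
  | FEq t1 t2 => tvars_in P t1 /\ tvars_in P t2
  | FRel r args => forall i, tvars_in P (args i)
  | FNeg p => fv_in P p
  | FImp p q | FAnd p q | FOr p q => fv_in P p /\ fv_in P q
  | FAll x p | FEx x p => fv_in (fun y => y = x \/ P y) p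
  end.

Definition sentence (phi : formula) : Prop := fv_in (fun _ => False) phi.

Definition formula_in (xs : list nat) (phi : formula) : Prop :=
  fv_in (fun y => In y xs) phi.

Definition fset := formula -> Prop.

Definition entails (S : fset) (chi : formula) : Prop :=
  forall (M : structure) (a : nat -> dom M),
    (forall s, S s -> sat M a s) -> sat M a chi.

Definition Th (S : fset) : fset := fun chi => sentence chi /\ entails S chi.

Definition add (S : fset) (phi : formula) : fset := fun s => S s \/ s = phi.
Definition union (S S' : fset) : fset := fun s => S s \/ S' s.

Definition forall_tuple (xs : list nat) (phi : formula) : formula :=
  fold_right FAll phi xs.
Definition exists_tuple (xs : list nat) (phi : formula) : formula :=
  fold_right FEx phi xs.

Definition is_type_over (T : fset) (xs : list nat) (p : fset) : Prop :=
  (forall psi, p psi -> formula_in xs psi) /\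
  exists (M : structure) (a : nat -> dom M),
    (forall s, T s -> sat M a s) /\ (forall psi, p psi -> sat M a psi).

Definition omit_p (xs : list nat) (p : fset) (S : fset) : fset :=
  fun chi => exists phi, formula_in xs phi /\
    (forall psi, p psi -> entails S (forall_tuple xs (FImp phi psi))) /\
    chi = FNeg (exists_tuple xs phi).

Definition brack_p (xs : list nat) (p : fset) (S : fset) : fset :=
  Th (union S (omit_p xs p S)).

(** Transfinite iteration along ordinals, represented by well-orders. *)
Definition well_order (W : Type) (lt : W -> W -> Prop) : Prop :=
  well_founded lt /\
  (forall u v w, lt u v -> lt v w -> lt u w) /\
  (forall u v, lt u v \/ u = v \/ lt v u).

Definition seteq (A B : fset) : Prop := forall chi, A chi <-> B chi.

(** s is the sequence of stages along (W, lt):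
    s 0 = base, s (v+1) = F (s v), s lambda = union_{v < lambda} s v. *)
Definition stages (W : Type) (lt : W -> W -> Prop) (base : fset)
    (F : fset -> fset) (s : W -> fset) : Prop :=
  forall w,
    ((forall v, ~ lt v w) -> seteq (s w) base) /\
    (forall v, lt v w -> (forall u, ~ (lt v u /\ lt u w)) -> seteq (s w) (F (s v))) /\
    ((exists v, lt v w) -> (forall v, lt v w -> exists u, lt v u /\ lt u w) ->
       seteq (s w) (fun chi => exists v, lt v w /\ s v chi)).

Definition brack_inf (xs : list nat) (p : fset) (S : fset) : fset :=
  fun chi => exists (W : Type) (lt : W -> W -> Prop) (s : W -> fset) (w : W),
    well_order lt /\ stages lt (Th S) (brack_p xs p) s /\ s w chi.

End FOL.

(** For a sentence φ and a theory X closed under consequence, let X/φ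
    ([relativize φ X]) be the set of sentences χ with (φ → χ) ∈ X; it has the same
    models as X + φ.  Adding the sentence φ commutes with the omission step: a
    formula θ omitting p over X + φ yields the formula θ ∧ φ omitting p over X, and
    ¬∃x̄(θ ∧ φ) together with φ gives ¬∃x̄ θ.  Hence [X/φ]^p = [X]^p/φ, so
    relativizing the stages [T]^p_α by φ produces the stages [T + φ]^p_α, and the
    theorem follows because stages along a well-order exist and are unique. *)
From Stdlib Require Import FunctionalExtensionality Classical.

Set Implicit Arguments.

Section Semantics.
Variable Sg : signature.

Lemma tvars_in_mono (P Q : nat -> Prop) (t : term Sg) :
  tvars_in P t -> (forall n, P n -> Q n) -> tvars_in Q t.
Proof.
  revert P Q; induction t as [n|f args IH]; simpl; intros P Q Ht HPQ; auto.
  intro i; apply (IH i P); auto.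
Qed.

Lemma fv_in_mono (phi : formula Sg) : forall P Q : nat -> Prop,
  fv_in P phi -> (forall n, P n -> Q n) -> fv_in Q phi.
Proof.
  induction phi; simpl; intros P Q H HPQ;
    try (destruct H; split); try (intro i); eauto using tvars_in_mono;
    (eapply IHphi; [eassumption|]; simpl; intros y [?|?]; auto).
Qed.

Lemma teval_agree (M : structure Sg) (P : nat -> Prop) (a b : nat -> dom M) (t : term Sg) :
  tvars_in P t -> (forall n, P n -> a n = b n) -> teval M a t = teval M b t.
Proof.
  intros Ht Hab; induction t as [n|f args IH]; simpl in *; auto.
  f_equal; apply functional_extensionality; intro i; auto.
Qed.

Lemma update_agree (M : structure Sg) (P : nat -> Prop) (a b : nat -> dom M) x d :
  (forall n, P n -> a n = b n) ->
  forall y, y = x \/ P y -> update M a x d y = update M b x d y.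
Proof.
  intros Hab y [->|Hy]; unfold update.
  - now rewrite PeanoNat.Nat.eqb_refl.
  - destruct (PeanoNat.Nat.eqb y x); auto.
Qed.

Lemma sat_agree (M : structure Sg) (phi : formula Sg) :
  forall (P : nat -> Prop) (a b : nat -> dom M),
  fv_in P phi -> (forall n, P n -> a n = b n) -> (sat M a phi <-> sat M b phi).
Proof.
  induction phi as [| t1 t2 | r args | phi IH | phi1 IH1 phi2 IH2 | phi1 IH1 phi2 IH2
                   | phi1 IH1 phi2 IH2 | x phi IH | x phi IH];
    intros P a b Hf Hab; simpl in *.
  - tauto.
  - destruct Hf as [H1 H2].
    now rewrite (teval_agree M P a b t1 H1 Hab), (teval_agree M P a b t2 H2 Hab).
  - replace (fun i => teval M a (args i)) with (fun i => teval M b (args i)); [tauto|].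
    apply functional_extensionality; intro i; symmetry; apply (teval_agree M P); auto.
  - rewrite (IH P a b Hf Hab); tauto.
  - destruct Hf; rewrite (IH1 P a b), (IH2 P a b); tauto.
  - destruct Hf; rewrite (IH1 P a b), (IH2 P a b); tauto.
  - destruct Hf; rewrite (IH1 P a b), (IH2 P a b); tauto.
  - split; intros H d; eapply (IH _ _ _ Hf (update_agree M P a b d Hab)); apply H.
  - split; intros [d H]; exists d; eapply (IH _ _ _ Hf (update_agree M P a b d Hab)); apply H.
Qed.

Lemma sentence_sat_indep (M : structure Sg) (phi : formula Sg) (a b : nat -> dom M) :
  sentence phi -> sat M a phi -> sat M b phi.
Proof. intros H; apply (sat_agree M phi (fun _ => False)); [exact H | intros n []]. Qed.

Lemma forall_tuple_mono (M : structure Sg) (A B : formula Sg) :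
  (forall b, sat M b A -> sat M b B) ->
  forall xs a, sat M a (forall_tuple xs A) -> sat M a (forall_tuple xs B).
Proof. intros H xs; induction xs; simpl; auto. Qed.

Lemma forall_tuple_valid (M : structure Sg) (A : formula Sg) :
  (forall b, sat M b A) -> forall xs a, sat M a (forall_tuple xs A).
Proof. intros H xs; induction xs; simpl; auto. Qed.

Lemma exists_tuple_mono (M : structure Sg) (A B : formula Sg) :
  (forall b, sat M b A -> sat M b B) ->
  forall xs a, sat M a (exists_tuple xs A) -> sat M a (exists_tuple xs B).
Proof. intros H xs; induction xs; simpl; [auto | intros a0 [d Hd]; eauto]. Qed.

Lemma entails_add_imp (S : fset Sg) (phi chi : formula Sg) :
  entails (add S phi) chi <-> entails S (FImp phi chi).
Proof.
  unfold entails, add; split; intros H M a Hs.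
  - intro Hp; apply H; intros s [Hs'| ->]; auto.
  - apply (H M a (fun s Hs' => Hs s (or_introl Hs'))), Hs; auto.
Qed.

Definition same_models (S S' : fset Sg) : Prop :=
  forall (M : structure Sg) a, (forall s, S s -> sat M a s) <-> (forall s, S' s -> sat M a s).

Lemma same_models_trans (A B C : fset Sg) :
  same_models A B -> same_models B C -> same_models A C.
Proof. intros H1 H2 M a; rewrite (H1 M a); apply H2. Qed.

Lemma seteq_same_models (A B : fset Sg) : seteq A B -> same_models A B.
Proof. intros E M a; split; intros H s Hs; apply H, E; auto. Qed.

Lemma same_models_union (A A' B B' : fset Sg) :
  same_models A A' -> same_models B B' -> same_models (union A B) (union A' B').
Proof.
  intros E1 E2 M a; specialize (E1 M a); specialize (E2 M a); unfold union.
  split; intros H.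
  - assert (HA : forall s, A' s -> sat M a s) by (apply E1; intros; apply H; auto).
    assert (HB : forall s, B' s -> sat M a s) by (apply E2; intros; apply H; auto).
    intros s [Hs|Hs]; auto.
  - assert (HA : forall s, A s -> sat M a s) by (apply E1; intros; apply H; auto).
    assert (HB : forall s, B s -> sat M a s) by (apply E2; intros; apply H; auto).
    intros s [Hs|Hs]; auto.
Qed.

Lemma entails_same_models (S S' : fset Sg) chi :
  same_models S S' -> entails S chi -> entails S' chi.
Proof. intros E H M a Hs; apply H, (E M a), Hs. Qed.

Lemma Th_same_models (S S' : fset Sg) : same_models S S' -> seteq (Th S) (Th S').
Proof.
  intros E chi; split; intros [H1 H2]; split; auto;
    eapply entails_same_models; eauto; intros M a; symmetry; apply E.
Qed.

Lemma Th_add (S : fset Sg) (phi : formula Sg) : sentence phi ->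
  forall chi, Th (add S phi) chi <-> sentence chi /\ Th S (FImp phi chi).
Proof.
  intros Hphi chi; unfold Th; rewrite entails_add_imp; simpl.
  split; [intros [H1 H2]; repeat split | intros [H1 [_ H2]]; split]; auto.
Qed.

End Semantics.

Section Relativization.
Variable Sg : signature.
Implicit Types (X S : fset Sg) (phi chi : formula Sg).

Record closed_theory X : Prop := {
  closed_sentence : forall chi, X chi -> sentence chi;
  closed_consequence : forall chi chi', X chi -> sentence chi' ->
    (forall (M : structure Sg) a, sat M a chi -> sat M a chi') -> X chi';
  closed_valid : forall chi, sentence chi -> (forall (M : structure Sg) a, sat M a chi) -> X chi }.

Lemma Th_closed S : closed_theory (Th S).
Proof.
  split; unfold Th.
  - now intros chi [H _].
  - intros chi chi' [_ H1] H2 H3; split; auto; intros M a Hs; apply H3, H1, Hs.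
  - intros chi H0 H; split; auto; intros M a _; apply H.
Qed.

Lemma closed_theory_seteq X Y : seteq X Y -> closed_theory Y -> closed_theory X.
Proof.
  intros E [C1 C2 C3]; split.
  - intros chi H; apply C1, E, H.
  - intros chi chi' H1 H2 H3; apply E; apply (C2 chi); auto; apply E, H1.
  - intros chi H1 H2; apply E; auto.
Qed.

Definition relativize phi X : fset Sg := fun chi => sentence chi /\ X (FImp phi chi).

Lemma relativize_same_models phi X : sentence phi -> closed_theory X ->
  same_models (relativize phi X) (add X phi).
Proof.
  intros Hphi [C1 C2 C3] M a; unfold relativize, add; split; intros H.
  - intros s [Hs| ->].
    + assert (Hsent := C1 s Hs).
      apply H; split; [exact Hsent|]; apply (C2 s); auto; [split | simpl]; auto.
    + apply (H phi); split; auto; apply C3; [split | simpl]; auto.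
  - intros s [Hs1 Hs2]; apply (H _ (or_introl Hs2)), H; auto.
Qed.

Section Omission.
Variables (xs : list nat) (p : fset Sg).

Lemma omit_p_mono S S' : (forall chi, S chi -> S' chi) ->
  forall chi, omit_p xs p S chi -> omit_p xs p S' chi.
Proof.
  intros HS chi [th [Hth [Hent ->]]]; exists th; repeat split; auto.
  intros psi Hp M a H; apply (Hent psi Hp); auto.
Qed.

Lemma omit_p_same_models S S' : same_models S S' -> seteq (omit_p xs p S) (omit_p xs p S').
Proof.
  intros E chi; split; intros [th [Hth [Hent ->]]]; exists th; repeat split; auto;
    intros psi Hp; eapply entails_same_models; eauto; intros M a; symmetry; apply E.
Qed.

Lemma omit_p_add_conj S phi th : sentence phi -> formula_in xs th ->
  (forall psi, p psi -> entails (add S phi) (forall_tuple xs (FImp th psi))) ->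
  omit_p xs p S (FNeg (exists_tuple xs (FAnd th phi))).
Proof.
  intros Hphi Hth Hent; exists (FAnd th phi); repeat split; auto.
  - eapply fv_in_mono; [exact Hphi | intros n []].
  - intros psi Hp M a HS.
    destruct (classic (sat M a phi)) as [Ha|Ha].
    + eapply forall_tuple_mono; [| apply (Hent psi Hp); intros s [Hs| ->]; auto].
      simpl; intros b H1 [H2 _]; auto.
    + apply forall_tuple_valid; simpl; intros b [_ Hb].
      exfalso; eapply Ha, sentence_sat_indep; eauto.
Qed.

Lemma omission_add_same_models S phi : sentence phi ->
  same_models (union (add S phi) (omit_p xs p (add S phi)))
              (add (union S (omit_p xs p S)) phi).
Proof.
  intros Hphi M a; unfold union, add; split; intros H;
    assert (Hpa : sat M a phi) by (apply H; auto).
  - intros s [[Hs|Hs]| ->]; auto.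
    apply H; right; revert Hs; apply omit_p_mono; unfold add; auto.
  - intros s [[Hs| ->]|[th [Hth [Hent ->]]]]; auto.
    assert (Hconj := H _ (or_introl (or_intror (@omit_p_add_conj S phi th Hphi Hth Hent)))).
    simpl in Hconj |- *; intro He; apply Hconj.
    eapply exists_tuple_mono; [|exact He].
    simpl; intros b Hb; split; auto; eapply sentence_sat_indep; eauto.
Qed.

Lemma brack_p_same_models S S' :
  same_models S S' -> seteq (brack_p xs p S) (brack_p xs p S').
Proof.
  intros E; apply Th_same_models, same_models_union; auto.
  apply seteq_same_models, omit_p_same_models, E.
Qed.

Lemma brack_p_seteq S S' : seteq S S' -> seteq (brack_p xs p S) (brack_p xs p S').
Proof. intros E; apply brack_p_same_models, seteq_same_models, E. Qed.

Lemma brack_p_relativize phi X : sentence phi -> closed_theory X ->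
  seteq (brack_p xs p (relativize phi X)) (relativize phi (brack_p xs p X)).
Proof.
  intros Hphi HX chi.
  assert (E : same_models (union (relativize phi X) (omit_p xs p (relativize phi X)))
                          (add (union X (omit_p xs p X)) phi)).
  { eapply same_models_trans; [|apply omission_add_same_models, Hphi].
    apply same_models_union; [|apply seteq_same_models, omit_p_same_models];
      apply relativize_same_models; auto. }
  unfold brack_p at 1; rewrite (Th_same_models E chi), Th_add; easy.
Qed.

End Omission.
End Relativization.

Section Stages.
Variables (Sg : signature) (W : Type) (lt : W -> W -> Prop).
Implicit Types (base : fset Sg) (F : fset Sg -> fset Sg) (s : W -> fset Sg).

Lemma min_succ_or_limit (w : W) :
  (forall v, ~ lt v w) \/
  (exists v, lt v w /\ forall u, ~ (lt v u /\ lt u w)) \/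
  ((exists v, lt v w) /\ forall v, lt v w -> exists u, lt v u /\ lt u w).
Proof.
  destruct (classic (exists v, lt v w)) as [Hex|Hn]; [right | left; firstorder].
  destruct (classic (exists v, lt v w /\ forall u, ~ (lt v u /\ lt u w))) as [Hs|Hns];
    [left; exact Hs | right; split; [exact Hex|]].
  intros v Hv; apply NNPP; intro Hc; apply Hns; exists v; split; auto.
  intros u Hu; apply Hc; exists u; exact Hu.
Qed.

Lemma stages_closed base F s : well_founded lt ->
  closed_theory base -> (forall X, closed_theory (F X)) -> stages lt base F s ->
  forall w, closed_theory (s w).
Proof.
  intros Hwf Hbase HF Hst w; induction w as [w IH] using (well_founded_ind Hwf).
  destruct (Hst w) as [Hmin [Hsucc Hlim]].
  destruct (min_succ_or_limit w) as [H|[[v [Hv Hm]]|[[v0 Hv0] Hl]]].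
  - eapply closed_theory_seteq; [apply Hmin, H | exact Hbase].
  - eapply closed_theory_seteq; [apply (Hsucc v Hv Hm) | apply HF].
  - eapply closed_theory_seteq; [apply Hlim; [exists v0|]; auto|]; split.
    + intros chi [v [Hv Hc]]; exact (closed_sentence (IH v Hv) _ Hc).
    + intros chi chi' [v [Hv Hc]] H1 H2; exists v; split; auto.
      exact (closed_consequence (IH v Hv) _ _ Hc H1 H2).
    + intros chi H1 H2; exists v0; split; auto; exact (closed_valid (IH v0 Hv0) _ H1 H2).
Qed.

Lemma stages_unique base F s1 s2 :
  well_founded lt -> (forall X Y, seteq X Y -> seteq (F X) (F Y)) ->
  stages lt base F s1 -> stages lt base F s2 -> forall w, seteq (s1 w) (s2 w).
Proof.
  intros Hwf HF H1 H2 w; induction w as [w IH] using (well_founded_ind Hwf).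
  destruct (H1 w) as [B1 [S1 L1]], (H2 w) as [B2 [S2 L2]].
  destruct (min_succ_or_limit w) as [H|[[v [Hv Hm]]|[Hex Hl]]]; intro chi.
  - rewrite (B1 H chi), (B2 H chi); tauto.
  - rewrite (S1 v Hv Hm chi), (S2 v Hv Hm chi); apply HF, IH, Hv.
  - rewrite (L1 Hex Hl chi), (L2 Hex Hl chi).
    split; intros [u [Hu Hc]]; exists u; split; auto; apply (IH u Hu); auto.
Qed.

Definition stage_step base F (w : W) (rec : forall v, lt v w -> fset Sg) : fset Sg :=
  fun chi =>
  ((forall v, ~ lt v w) /\ base chi) \/
  (exists v (H : lt v w), (forall u, ~ (lt v u /\ lt u w)) /\ F (rec v H) chi) \/
  ((exists v, lt v w) /\ (forall v, lt v w -> exists u, lt v u /\ lt u w) /\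
     exists v (H : lt v w), rec v H chi).

Lemma stages_exist base F : well_order lt -> exists s, stages lt base F s.
Proof.
  intros [Hwf [Htr Htri]].
  set (t := Fix Hwf (fun _ => fset Sg) (stage_step base F)).
  assert (Ht : forall w, t w = @stage_step base F w (fun v _ => t v)).
  { intro w; apply (Fix_eq Hwf (fun _ => fset Sg) (stage_step base F)); intros x f g Hfg.
    replace g with f; [reflexivity|].
    apply functional_extensionality_dep; intro y.
    apply functional_extensionality_dep; intro Hy; apply Hfg. }
  exists t; intro w; split; [|split].
  - intros Hn chi; rewrite Ht; unfold stage_step; split; [|auto].
    intros [[_ Hb]|[[v [Hv _]]|[[v Hv] _]]]; auto; exfalso; apply (Hn v Hv).
  - intros v Hv Hm chi; rewrite Ht; unfold stage_step; split; [|right; left; eauto].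
    intros [[Hn _]|[[v' [Hv' [Hm' Hc]]]|[_ [Hl _]]]].
    + exfalso; apply (Hn v Hv).
    + destruct (Htri v v') as [Hlt|[->|Hlt]]; [exfalso; apply (Hm v') | exact Hc
                                               | exfalso; apply (Hm' v)]; auto.
    + destruct (Hl v Hv) as [u Hu]; exfalso; apply (Hm u Hu).
  - intros Hex Hl chi; rewrite Ht; unfold stage_step; split.
    + intros [[Hn _]|[[v' [Hv' [Hm' Hc]]]|[_ [_ [v [Hv Hc]]]]]].
      * destruct Hex as [v Hv]; exfalso; apply (Hn v Hv).
      * destruct (Hl v' Hv') as [u Hu]; exfalso; apply (Hm' u Hu).
      * exists v; auto.
    + intros [v [Hv Hc]]; right; right; repeat split; auto; exists v, Hv; exact Hc.
Qed.

Lemma stages_relativize (xs : list nat) (p T : fset Sg) (phi : formula Sg) s :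
  sentence phi -> well_founded lt -> stages lt (Th T) (brack_p xs p) s ->
  stages lt (Th (add T phi)) (brack_p xs p) (fun w => relativize phi (s w)).
Proof.
  intros Hphi Hwf Hst w; destruct (Hst w) as [Hmin [Hsucc Hlim]]; split; [|split].
  - intros Hn chi; rewrite Th_add by exact Hphi.
    unfold relativize; rewrite (Hmin Hn (FImp phi chi)); tauto.
  - intros v Hv Hm chi; cbv beta.
    rewrite (@brack_p_relativize Sg xs p phi (s v) Hphi
               (stages_closed Hwf (Th_closed T) (fun X => Th_closed _) Hst v) chi).
    unfold relativize; rewrite (Hsucc v Hv Hm (FImp phi chi)); tauto.
  - intros Hex Hl chi; unfold relativize; rewrite (Hlim Hex Hl (FImp phi chi)); firstorder.
Qed.

End Stages.

Theorem mainTheorem15 (Sg : signature) (T : fset Sg) (xs : list nat) (p : fset Sg) :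
  (forall s, T s -> sentence s) ->
  is_type_over T xs p ->
  forall phi sigma : formula Sg, sentence phi -> sentence sigma ->
    (brack_inf xs p T (FImp phi sigma) <-> brack_inf xs p (add T phi) sigma).
Proof.
  intros _ _ phi sigma Hphi Hsigma; split.
  - intros [W [lt [s [w [Hwo [Hst Hw]]]]]].
    exists W, lt, (fun w => relativize phi (s w)), w.
    split; [exact Hwo | split; [apply stages_relativize; auto; apply Hwo | split; auto]].
  - intros [W [lt [s [w [Hwo [Hst Hw]]]]]].
    destruct (stages_exist (Th T) (brack_p xs p) Hwo) as [t Ht].
    assert (Hrel := stages_relativize phi Hphi (proj1 Hwo) Ht).
    assert (Hsame := stages_unique (proj1 Hwo) (brack_p_seteq xs p) Hrel Hst w sigma).
    exists W, lt, t, w; split; [exact Hwo | split; [exact Ht | apply Hsame, Hw]].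
Qed.
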